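(* Let $N\ge2$, $a\in\mathbb{R}$, $\alpha\in(0,1]$, $\sigma_r^2,\sigma_w^2\ge0$. Let $P$ be a symmetric, doubly stochastic, positive semi-definite $N\times N$ matrix with nonnegative entries and eigenvalues $-1<\lambda_N(P)\le\dots\le\lambda_2(P)<\lambda_1(P)=1$, with orthonormal eigenvectors $v_1=\mathbf 1_N/\sqrt N,v_2,\dots,v_N$, and suppose $|a|<1/|\alpha|$ and that $a(P-\alpha I_N)$ has spectral radius less than $1$. Let $\mathcal E=\{\{i,j\}: i\ne j,\ p_{ij}>0\}$ and assume some pair $\{i,j\}$, $i\neq j$, is not in $\mathcal E$. For such a pair and $\epsilon>0$, let $\Delta P(i,j)=-(\mathbf e_i-\mathbf e_j)(\mathbf e_i-\mathbf e_j)^{\mathsf T}$, $P_\epsilon=P+\epsilon\Delta P(i,j)$, $z_k(i,j)=\epsilon\, v_k^{\mathsf T}\Delta P(i,j)v_k$, and $$h_k(i,j)=\frac{z_k(i,j)\big(2(1-\alpha^2a^2)\lambda_k(P)+2a^2\alpha\lambda_k^2(P)\big)}{\big(1-a^2(\lambda_k(P)-\alpha)^2\big)^2}.$$ With $\tilde{\mathrm{MSD}}(M,\alpha)=\frac{\sigma_r^2}{1-a^2(1-\alpha)^2}+\frac1N\sum_{k=1}^N\frac{a^2\alpha^2\sigma_w^2\lambda_k^2(M)}{1-a^2(\lambda_k(M)-\alpha)^2}$, the following hold. (i) For each pair $\{i,j\}\notin\mathcal E$, as $\epsilon\to0$, $$\tilde{\mathrm{MSD}}(P_\epsilon,\alpha)-\tilde{\mathrm{MSD}}(P,\alpha)=\frac{a^2\alpha^2\sigma_w^2}{N}\sum_{k=1}^Nh_k(i,j)+\mathcal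 O(\epsilon^2),$$ so that, for $\epsilon\ll1$, the edge whose addition with weight $\epsilon$ most reduces $\tilde{\mathrm{MSD}}$ is found by solving $\min_{\{i,j\}\notin\mathcal E}\sum_{k=1}^Nh_k(i,j)$. (ii) Letting $\zeta_{\max}=\max_{k>1}|\lambda_k(P)-\alpha|$, $$\min_{\{i,j\}\notin\mathcal E}\sum_{k=1}^Nh_k(i,j)\ \ge\ \min_{\{i,j\}\notin\mathcal E}\frac{-2\epsilon\Big((1-\alpha^2a^2)(p_{ii}+p_{jj})+a^2\alpha\big([P^2]_{ii}+[P^2]_{jj}-2[P^2]_{ij}\big)\Big)}{\big(1-a^2\zeta_{\max}^2\big)^2}.$$
   Context: $\tilde{\mathrm{MSD}}(M,\alpha)$ is the steady-state mean square deviation per agent of the estimator $\tilde{x}_{i,t+1}=a(\sum_jm_{ij}\tilde{x}_{j,t}+\alpha(\sum_jm_{ij}y_{j,t}-\tilde{x}_{i,t}))$ for the model $x_{t+1}=ax_t+r_t$, $y_{i,t}=x_t+w_{i,t}$. $P_\epsilon$ corresponds to adding the edge $\{i,j\}$ with weight $\epsilon$ and subtracting $\epsilon$ from the self-reliances $p_{ii},p_{jj}$. $\mathbf e_i$ is the $i$-th standard basis vector; $[P^2]_{ij}$ is the $(i,j)$ entry of $P^2$. *)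

From HB Require Import structures.
From mathcomp Require Import all_boot all_order all_algebra.
From mathcomp Require Import complex.
Set Implicit Arguments. Unset Strict Implicit. Unset Printing Implicit Defensive.
Import Order.TTheory GRing.Theory Num.Theory.
Local Open Scope ring_scope.
Local Open Scope complex_scope.

Section Defs.
Variables (R : rcfType) (N : nat).

Definition spectral_radius_lt1 (A : 'M[R]_N) : Prop :=
  forall z : R[i], eigenvalue (map_mx (fun x : R => x%:C) A) z -> `|z| < 1.

Definition orth_eig (M : 'M[R]_N) (lam : 'I_N -> R) (V : 'M[R]_N) : Prop :=
  V^T *m V = 1%:M /\ forall k, M *m col k V = lam k *: col k V.

Definition ebasis (i : 'I_N) : 'cV[R]_N := delta_mx i 0.

Definition dP (i j : 'I_N) : 'M[R]_N :=
  - ((ebasis i - ebasis j) *m (ebasis i - ebasis j)^T).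

Definition Peps (P : 'M[R]_N) (eps : R) (i j : 'I_N) : 'M[R]_N :=
  P + eps *: dP i j.

Definition zk (V : 'M[R]_N) (eps : R) (i j k : 'I_N) : R :=
  eps * ((col k V)^T *m dP i j *m col k V) 0 0.

Definition hk (a alpha : R) (lam : 'I_N -> R) (V : 'M[R]_N) (eps : R)
  (i j k : 'I_N) : R :=
  zk V eps i j k * (2 * (1 - alpha ^+ 2 * a ^+ 2) * lam k
                    + 2 * a ^+ 2 * alpha * lam k ^+ 2)
  / (1 - a ^+ 2 * (lam k - alpha) ^+ 2) ^+ 2.

(* tilde MSD, computed from the eigenvalues lam of M; sr2 = sigma_r^2, sw2 = sigma_w^2 *)
Definition msd (a alpha sr2 sw2 : R) (lam : 'I_N -> R) : R :=
  sr2 / (1 - a ^+ 2 * (1 - alpha) ^+ 2)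
  + N%:R^-1 * \sum_(k < N) (a ^+ 2 * alpha ^+ 2 * sw2 * lam k ^+ 2)
                           / (1 - a ^+ 2 * (lam k - alpha) ^+ 2).

Definition nonedge (P : 'M[R]_N) (x : 'I_N * 'I_N) : bool :=
  (x.1 != x.2) && ~~ (0 < P x.1 x.2).

(* minimum of f over the nonedges; the default x0 is assumed to be a nonedge *)
Definition min_nonedge (P : 'M[R]_N) (x0 : 'I_N * 'I_N) (f : 'I_N * 'I_N -> R) : R :=
  \big[Num.min/f x0]_(x | nonedge P x) f x.

Definition zeta_max (alpha : R) (lam : 'I_N -> R) : R :=
  \big[Num.max/0]_(k < N | (0 < val k)%N) `|lam k - alpha|.

Definition bound_ij (a alpha : R) (P : 'M[R]_N) (lam : 'I_N -> R) (eps : R)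
  (i j : 'I_N) : R :=
  - 2 * eps * ((1 - alpha ^+ 2 * a ^+ 2) * (P i i + P j j)
               + a ^+ 2 * alpha * ((P *m P) i i + (P *m P) j j - 2 * (P *m P) i j))
  / (1 - a ^+ 2 * zeta_max alpha lam ^+ 2) ^+ 2.

End Defs.

(* Conjugating by the eigenbasis V turns P_eps into L + eps F, with L = diag(lambda) and
   F = V^T DeltaP V, and the eigenvalue sum in MSD becomes tr(M^2 (I - a^2 (M - alpha)^2)^-1)
   for M = L + eps F; this trace does not depend on how the eigenvalues of P_eps are
   labelled.  Expanding the inverse around the diagonal matrix L gives the first-order
   term sum_k F_kk f'(lambda_k) with f(x) = x^2 / (1 - a^2 (x - alpha)^2), which is
   eps^-1 sum_k h_k because z_k = eps F_kk; an entrywise l1 bound makes the remainder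
   O(eps^2).
   For the lower bound, every z_k is <= 0 and z_1 = 0 because v_1 is constant, while the
   numerator of h_k is >= 0 because P is positive semidefinite; replacing each
   denominator by the smallest one, (1 - a^2 zeta_max^2)^2, therefore only lowers h_k, and
   the resulting sum is a combination of tr(DeltaP P) and tr(DeltaP P^2), which are read
   off the entries of P and P^2. *)

From HB Require Import structures.
From mathcomp Require Import all_boot all_order all_algebra.
From mathcomp Require Import complex.
From mathcomp Require Import ring lra.
Set Implicit Arguments. Unset Strict Implicit. Unset Printing Implicit Defensive.
Import Order.TTheory GRing.Theory Num.Theory.
Local Open Scope ring_scope.

Section EntrywiseNorm.
Variable R : numDomainType.

Definition mxnorm1 m n (A : 'M[R]_(m, n)) : R := \sum_i \sum_j `|A i j|.

Lemma mxnorm1_ge0 m n (A : 'M[R]_(m, n)) : 0 <= mxnorm1 A.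
Proof. by apply: sumr_ge0 => i _; apply: sumr_ge0. Qed.

Lemma ler_mxnorm1 m n (A : 'M[R]_(m, n)) i j : `|A i j| <= mxnorm1 A.
Proof.
rewrite /mxnorm1 (bigD1 i) //= (bigD1 j) //= -addrA lerDl.
by apply: addr_ge0; apply: sumr_ge0 => *; rewrite ?sumr_ge0.
Qed.

Lemma mxnorm1_le0 m n (A : 'M[R]_(m, n)) : mxnorm1 A <= 0 -> A = 0.
Proof.
move=> h; apply/matrixP => i j; rewrite mxE; apply/eqP; rewrite -normr_le0.
exact: le_trans (ler_mxnorm1 A i j) h.
Qed.

Lemma mxnorm1D m n (A B : 'M[R]_(m, n)) : mxnorm1 (A + B) <= mxnorm1 A + mxnorm1 B.
Proof.
rewrite /mxnorm1 -big_split /=; apply: ler_sum => i _.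
by rewrite -big_split /=; apply: ler_sum => j _; rewrite mxE ler_normD.
Qed.

Lemma mxnorm1Z m n c (A : 'M[R]_(m, n)) : mxnorm1 (c *: A) = `|c| * mxnorm1 A.
Proof.
rewrite /mxnorm1 mulr_sumr; apply: eq_bigr => i _; rewrite mulr_sumr.
by apply: eq_bigr => j _; rewrite mxE normrM.
Qed.

Lemma mxnorm1M m n p (A : 'M[R]_(m, n)) (B : 'M[R]_(n, p)) :
  mxnorm1 (A *m B) <= mxnorm1 A * mxnorm1 B.
Proof.
rewrite /mxnorm1 mulr_suml; apply: ler_sum => i _.
apply: (@le_trans _ _ (\sum_j \sum_l `|A i l| * `|B l j|)).
  apply: ler_sum => j _; rewrite mxE; apply: le_trans (ler_norm_sum _ _ _) _.
  by apply: ler_sum => l _; rewrite normrM.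
rewrite exchange_big /= mulr_suml; apply: ler_sum => l _.
rewrite -mulr_sumr; apply: ler_wpM2l => //.
by rewrite (bigD1 l) //= lerDl; apply: sumr_ge0 => *; apply: sumr_ge0.
Qed.

Lemma mxnorm1M_le m n p (A : 'M[R]_(m, n)) (B : 'M[R]_(n, p)) x y :
  mxnorm1 A <= x -> mxnorm1 B <= y -> mxnorm1 (A *m B) <= x * y.
Proof.
by move=> hA hB; apply: le_trans (mxnorm1M A B) _; rewrite ler_pM ?mxnorm1_ge0.
Qed.

Lemma norm_trace_le n (A : 'M[R]_n) : `|\tr A| <= mxnorm1 A.
Proof.
apply: le_trans (ler_norm_sum _ _ _) _; apply: ler_sum => i _.
by rewrite (bigD1 i) //= lerDl; apply: sumr_ge0.
Qed.

End EntrywiseNorm.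

Section ResolventPerturbation.
Variables (R : realFieldType) (n : nat) (D0 Y G : 'M[R]_n) (eps : R).
Hypotheses (YD0 : Y *m D0 = 1%:M) (eps_ge0 : 0 <= eps).
Hypothesis small : eps * (mxnorm1 Y * mxnorm1 G) <= 2^-1.

Let D := D0 - eps *: G.

Let contraction_fix (x : 'rV[R]_n) : x = eps *: (x *m G *m Y) -> x = 0.
Proof.
move=> hx; apply: mxnorm1_le0.
have : mxnorm1 x <= mxnorm1 x * (eps * (mxnorm1 Y * mxnorm1 G)).
  rewrite {1}hx mxnorm1Z ger0_norm // [_ * (eps * _)]mulrCA ler_wpM2l //.
  by rewrite [mxnorm1 Y * _]mulrC mulrA; do 2 apply: mxnorm1M_le => //.
have := mxnorm1_ge0 x; have := ler_wpM2l (mxnorm1_ge0 x) small; lra.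
Qed.

Lemma perturb_unitmx : D \in unitmx.
Proof.
rewrite unitmxE unitfE; apply/negP => /det0P [v vnz /eqP].
rewrite /D mulmxBr -scalemxAr subr_eq0 => /eqP hv.
move/eqP: vnz; apply; apply: contraction_fix.
by rewrite scalemxAl -hv -mulmxA (mulmx1C YD0) mulmx1.
Qed.

Lemma perturb_invmxE : invmx D = Y + eps *: (Y *m G *m invmx D).
Proof.
have /eqP := mulmxV perturb_unitmx; rewrite /D mulmxBl -scalemxAl subr_eq => /eqP h.
by rewrite -{1}[invmx _]mul1mx -YD0 -!mulmxA h mulmxDr mulmx1 -scalemxAr.
Qed.

Lemma perturb_invmx_le : mxnorm1 (invmx D) <= 2 * mxnorm1 Y.
Proof.
have : mxnorm1 (invmx D) <= mxnorm1 Y + mxnorm1 (invmx D) * (eps * (mxnorm1 Y * mxnorm1 G)).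
  rewrite {1}perturb_invmxE; apply: le_trans (mxnorm1D _ _) _; rewrite lerD //.
  rewrite mxnorm1Z ger0_norm // [_ * (eps * _)]mulrCA ler_wpM2l //.
  by rewrite mulrC; apply: mxnorm1M_le => //; apply: mxnorm1M_le.
move: (invmx D) (mxnorm1_ge0 (invmx D)) => X X0.
have := ler_wpM2l X0 small; lra.
Qed.

End ResolventPerturbation.

Section TraceExpansion.
Variables (R : realFieldType) (n : nat) (B0 B1 B2 Y G0 G1 X : 'M[R]_n) (eps : R).
Let G := G0 + eps *: G1.
Hypothesis resolventX : X = Y + eps *: (Y *m G *m X).

Lemma trace_resolvent_expansion :
  \tr ((B0 + eps *: B1 + eps ^+ 2 *: B2) *m X)
    - \tr (B0 *m Y) - eps * (\tr (B0 *m Y *m G0 *m Y) + \tr (B1 *m Y))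
  = eps ^+ 2 * (\tr (B0 *m Y *m G *m Y *m G *m X) + \tr (B0 *m Y *m G1 *m Y)
                + \tr (B1 *m Y *m G *m X) + \tr (B2 *m X)).
Proof.
have trX M : \tr (M *m X) = \tr (M *m Y) + eps * \tr (M *m Y *m G *m X).
  by rewrite {1}resolventX mulmxDr -scalemxAr mxtraceD mxtraceZ !mulmxA.
have trG M : \tr (M *m G *m Y) = \tr (M *m G0 *m Y) + eps * \tr (M *m G1 *m Y).
  by rewrite /G mulmxDr mulmxDl -scalemxAr -scalemxAl mxtraceD mxtraceZ.
rewrite !mulmxDl -!scalemxAl !mxtraceD !mxtraceZ trX (trX (B0 *m Y *m G)).
by rewrite trG (trX B1); ring.
Qed.

Lemma trace_resolvent_expansion_le b0 b1 b2 y g g1 x :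
  mxnorm1 B0 <= b0 -> mxnorm1 B1 <= b1 -> mxnorm1 B2 <= b2 -> mxnorm1 Y <= y ->
  mxnorm1 G <= g -> mxnorm1 G1 <= g1 -> mxnorm1 X <= x ->
  `|\tr ((B0 + eps *: B1 + eps ^+ 2 *: B2) *m X)
    - \tr (B0 *m Y) - eps * (\tr (B0 *m Y *m G0 *m Y) + \tr (B1 *m Y))|
  <= eps ^+ 2 * (b0 * y * g * y * g * x + b0 * y * g1 * y + b1 * y * g * x + b2 * x).
Proof.
move=> *; rewrite trace_resolvent_expansion normrM ger0_norm ?sqr_ge0 //.
rewrite ler_wpM2l ?sqr_ge0 //.
repeat (apply: le_trans (ler_normD _ _) _; apply: lerD);
  by apply: le_trans (norm_trace_le _) _; do ?apply: mxnorm1M_le.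
Qed.

End TraceExpansion.

Lemma diag_sub_scalar (R : pzRingType) n (d : 'I_n -> R) c :
  diag_mx (\row_k d k) - c%:M = diag_mx (\row_k (d k - c)).
Proof.
by apply/matrixP => i j; rewrite !mxE; case: eqP; rewrite ?mulr1n ?mulr0n ?subr0.
Qed.

Section Denominator.
Variables (R : realFieldType) (a alpha : R).

Definition den (x : R) : R := 1 - a ^+ 2 * (x - alpha) ^+ 2.

(* The derivative of [x |-> x ^+ 2 / den x]. *)
Definition dratio (x : R) : R :=
  (2 * (1 - alpha ^+ 2 * a ^+ 2) * x + 2 * a ^+ 2 * alpha * x ^+ 2) / den x ^+ 2.

Definition denmx n (M : 'M[R]_n) : 'M[R]_n :=
  1%:M - a ^+ 2 *: ((M - alpha%:M) *m (M - alpha%:M)).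

Lemma denmx_eig n (M : 'M[R]_n) (w : 'cV_n) mu :
  M *m w = mu *: w -> denmx M *m w = den mu *: w.
Proof.
move=> hw; have hA : (M - alpha%:M) *m w = (mu - alpha) *: w.
  by rewrite mulmxBl hw mul_scalar_mx scalerBl.
rewrite mulmxBl mul1mx -scalemxAl -mulmxA hA -scalemxAr hA !scalerA.
by rewrite /den scalerBl scale1r expr2 mulrA.
Qed.

Lemma denmx_diag n (d : 'I_n -> R) :
  denmx (diag_mx (\row_k d k)) = diag_mx (\row_k den (d k)).
Proof.
rewrite /denmx diag_sub_scalar mul_diag_mx; apply/matrixP => i j; rewrite !mxE.
by case: eqP => [->|_]; rewrite ?mulr1n ?mulr0n /den ?mulr0 ?subr0.
Qed.

Lemma denmxDr n (L F : 'M[R]_n) eps :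
  denmx (L + eps *: F) = denmx L
    - eps *: (a ^+ 2 *: ((L - alpha%:M) *m F + F *m (L - alpha%:M))
              + eps *: (a ^+ 2 *: (F *m F))).
Proof.
rewrite /denmx addrAC !mulmxDl !mulmxDr -!scalemxAl -!scalemxAr.
by apply/matrixP => i j; rewrite !mxE; ring.
Qed.

Section EigenbasisTrace.
Variables (n : nat) (M W X : 'M[R]_n) (mu : 'I_n -> R).
Hypotheses (WtW : W^T *m W = 1%:M) (eigW : forall k, M *m col k W = mu k *: col k W).
Hypothesis Xden : X *m denmx M = 1%:M.

Let Xeig k : den (mu k) *: (X *m col k W) = col k W.
Proof. by rewrite scalemxAr -(denmx_eig (eigW k)) mulmxA Xden mul1mx. Qed.

Lemma den_eig_neq0 k : den (mu k) != 0.
Proof.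
apply/eqP => den0; have := congr1 (fun A : 'M[R]_n => A k k) WtW.
rewrite !mxE eqxx big1 => [/eqP|l _]; first by rewrite eq_sym oner_eq0.
have := congr1 (fun v : 'cV_n => v l 0) (Xeig k); rewrite den0 scale0r !mxE => <-.
by rewrite mulr0.
Qed.

Lemma sum_eig_ratio : \sum_k mu k ^+ 2 / den (mu k) = \tr (M *m M *m X).
Proof.
have hcol k : M *m M *m X *m col k W = (mu k ^+ 2 / den (mu k)) *: col k W.
  have hX : X *m col k W = (den (mu k))^-1 *: col k W.
    by apply: (scalerI (den_eig_neq0 k)); rewrite Xeig scalerA divff ?scale1r ?den_eig_neq0.
  rewrite -!mulmxA hX -!scalemxAr eigW -scalemxAr eigW !scalerA.
  by rewrite [_ / _]mulrC expr2 mulrA.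
have hMW : M *m M *m X *m W = W *m diag_mx (\row_k (mu k ^+ 2 / den (mu k))).
  apply/matrixP => i k; have := congr1 (fun v : 'cV_n => v i 0) (hcol k).
  rewrite mul_mx_diag !mxE [_ * W i k]mulrC => <-.
  by apply: eq_bigr => j _; rewrite !mxE.
rewrite -[M *m M *m X]mulmx1 -(mulmx1C WtW) mulmxA mxtrace_mulC hMW mulmxA WtW.
by rewrite mul1mx mxtrace_diag; apply: eq_bigr => k _; rewrite mxE.
Qed.

End EigenbasisTrace.

Section DiagonalExpansion.
Variables (n : nat) (lam : 'I_n -> R) (F : 'M[R]_n).
Hypothesis den_lam_neq0 : forall k, den (lam k) != 0.

Let L := diag_mx (\row_k lam k).
Let Y := diag_mx (\row_k (den (lam k))^-1).
Let G0 := a ^+ 2 *: ((L - alpha%:M) *m F + F *m (L - alpha%:M)).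
Let G1 := a ^+ 2 *: (F *m F).

Let Y_denmx : Y *m denmx L = 1%:M.
Proof.
rewrite denmx_diag mul_diag_mx; apply/matrixP => i j; rewrite !mxE.
by case: eqP => [->|_]; rewrite ?mulr1n ?mulr0n ?mulr0 ?mulVf.
Qed.

Let LLY : L *m L *m Y = diag_mx (\row_k (lam k ^+ 2 / den (lam k))).
Proof.
rewrite mul_diag_mx mul_mx_diag; apply/matrixP => i j; rewrite !mxE.
by case: eqP => [->|_]; rewrite ?mulr1n ?mulr0n ?mulr0 ?mul0r // expr2.
Qed.

Let first_order_term :
  \tr (L *m L *m Y *m G0 *m Y) + \tr ((L *m F + F *m L) *m Y)
  = \sum_k F k k * dratio (lam k).
Proof.
rewrite LLY /G0 /L diag_sub_scalar /mxtrace -big_split; apply: eq_bigr => k _ /=.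
rewrite !(mul_diag_mx, mul_mx_diag) !mxE.
by move: (den_lam_neq0 k); rewrite /dratio /den => ?; field; rewrite exprMn.
Qed.

Lemma trace_denmx_expansion : exists C delta : R, 0 < delta /\
  forall eps, 0 < eps -> eps < delta ->
  exists X, X *m denmx (L + eps *: F) = 1%:M /\
    `|\tr ((L + eps *: F) *m (L + eps *: F) *m X) - \sum_k lam k ^+ 2 / den (lam k)
      - eps * \sum_k F k k * dratio (lam k)| <= C * eps ^+ 2.
Proof.
pose y := mxnorm1 Y; pose g := mxnorm1 G0 + mxnorm1 G1; pose g1 := mxnorm1 G1.
pose b0 := mxnorm1 (L *m L); pose b1 := mxnorm1 (L *m F + F *m L).
pose b2 := mxnorm1 (F *m F).
have y_ge0 : 0 <= y := mxnorm1_ge0 Y.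
have yg_ge0 : 0 <= y * g by rewrite mulr_ge0 ?addr_ge0 ?mxnorm1_ge0.
exists (b0 * y * g * y * g * (2 * y) + b0 * y * g1 * y + b1 * y * g * (2 * y) + b2 * (2 * y)).
exists (2 * (y * g) + 2)^-1; split=> [|eps eps_gt0]; first by rewrite invr_gt0; lra.
rewrite -[_^-1]div1r ltr_pdivlMr; last by lra.
move=> eps_small; have eps_ge0 := ltW eps_gt0; have eps_le1 : eps <= 1 by nra.
have normG : mxnorm1 (G0 + eps *: G1) <= g.
  apply: le_trans (mxnorm1D _ _) _; rewrite lerD2l mxnorm1Z ger0_norm //.
  by have := mxnorm1_ge0 G1; nra.
have small : eps * (y * mxnorm1 (G0 + eps *: G1)) <= 2^-1.
  have : eps * (y * mxnorm1 (G0 + eps *: G1)) <= eps * (y * g).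
    by rewrite ler_wpM2l // ler_wpM2l.
  lra.
rewrite denmxDr -/G0 -/G1.
exists (invmx (denmx L - eps *: (G0 + eps *: G1))).
split; first exact/mulVmx/(perturb_unitmx Y_denmx eps_ge0 small).
have -> : (L + eps *: F) *m (L + eps *: F)
    = L *m L + eps *: (L *m F + F *m L) + eps ^+ 2 *: (F *m F).
  rewrite mulmxDl !mulmxDr -!scalemxAl -!scalemxAr scalerA.
  by apply/matrixP => i j; rewrite !mxE; ring.
have -> : \sum_k lam k ^+ 2 / den (lam k) = \tr (L *m L *m Y).
  by rewrite LLY mxtrace_diag; apply: eq_bigr => k _; rewrite mxE.
rewrite -first_order_term [X in _ <= X]mulrC.
apply: trace_resolvent_expansion_le => //.
- exact: perturb_invmxE.
- exact: normG.
- exact: lexx.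
- exact: (perturb_invmx_le Y_denmx eps_ge0 small).
Qed.

End DiagonalExpansion.

End Denominator.

Lemma eig_spectral_bound (R : rcfType) n (P : 'M[R]_n) (v : 'cV[R]_n) (l a alpha : R) :
  P^T = P -> v != 0 -> P *m v = l *: v ->
  spectral_radius_lt1 (a *: (P - alpha%:M)) -> `|a * (l - alpha)| < 1.
Proof.
move=> Psym vnz Pv /(_ (a * (l - alpha))%:C%C); rewrite normc_def /= expr0n addr0.
rewrite sqrtr_sqr -[X in (_ < X)%R]/((1 : R)%:C)%C ltcR; apply.
apply/eigenvalueP; exists (map_mx (real_complex R) v^T); last first.
  by rewrite map_mx_eq0 trmx_eq0.
rewrite -map_mxM -map_mxZ; congr map_mx.
rewrite -scalemxAr mulmxBr mul_mx_scalar -{1}Psym -trmx_mul Pv.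
by rewrite !linearZ /= scalerN -scaleNr -scalerDl scalerA.
Qed.

Section EdgeMatrix.
Variables (R : rcfType) (n : nat) (i j : 'I_n).

Let ebasisT_mul m (M : 'M[R]_(n, m)) k :
  ((ebasis R i - ebasis R j)^T *m M) 0 k = M i k - M j k.
Proof. by rewrite linearB /= mulmxBl /ebasis !trmx_delta -!rowE !mxE. Qed.

Lemma quad_dP (v : 'cV[R]_n) : (v^T *m dP R i j *m v) 0 0 = - (v i 0 - v j 0) ^+ 2.
Proof.
rewrite /dP mulmxN mulNmx mxE mulmxA -mulmxA mxE big_ord1 -[v^T *m _]trmxK trmx_mul trmxK.
by rewrite mxE ebasisT_mul expr2.
Qed.

Lemma trace_dP (M : 'M[R]_n) : \tr (dP R i j *m M) = - (M i i + M j j - M i j - M j i).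
Proof.
rewrite /dP mulNmx raddfN /= -mulmxA mxtrace_mulC /mxtrace big_ord1.
set u := ebasis R i - ebasis R j.
have -> : (u^T *m M *m u) 0 0 = (u^T *m M *m u)^T 0 0 by rewrite [RHS]mxE.
by rewrite trmx_mul /u ebasisT_mul ![(_^T) _ 0]mxE !ebasisT_mul; congr (- _); ring.
Qed.

End EdgeMatrix.

Section ZetaMax.
Variables (R : rcfType) (n : nat) (a alpha : R) (lam : 'I_n -> R).

Lemma zeta_max_ge k : (0 < val k)%N -> `|lam k - alpha| <= zeta_max alpha lam.
Proof. exact: le_bigmax_cond. Qed.

Lemma sqr_zeta_max_lt :
  (forall k : 'I_n, (0 < val k)%N -> a ^+ 2 * (lam k - alpha) ^+ 2 < 1) ->
  a ^+ 2 * zeta_max alpha lam ^+ 2 < 1.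
Proof.
move=> lt1; suff [] : 0 <= zeta_max alpha lam /\ a ^+ 2 * zeta_max alpha lam ^+ 2 < 1 by [].
apply: (big_ind (fun x => 0 <= x /\ a ^+ 2 * x ^+ 2 < 1)) => [|x y|k /lt1].
- by rewrite expr0n mulr0 ltr01.
- by rewrite maxEle; case: (x <= y).
- by rewrite real_normK ?num_real.
Qed.

Lemma den_zeta_max_le k : (0 < val k)%N ->
  1 - a ^+ 2 * zeta_max alpha lam ^+ 2 <= den a alpha (lam k).
Proof.
move=> /zeta_max_ge; rewrite /den lerD2l lerN2 => le_zeta.
rewrite ler_wpM2l ?sqr_ge0 // -real_normK ?num_real // ler_sqr ?nnegrE //.
exact: le_trans le_zeta.
Qed.

End ZetaMax.

Lemma le_min_nonedge (R : rcfType) n (P : 'M[R]_n) x0 (f g : 'I_n * 'I_n -> R) :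
  g x0 <= f x0 -> (forall x, nonedge P x -> g x <= f x) ->
  min_nonedge P x0 g <= min_nonedge P x0 f.
Proof.
by move=> le0 le; apply: (big_ind2 (fun u v => u <= v)) => // *; apply: le_min2.
Qed.

Lemma ler_npdiv_sqr (R : realFieldType) (x d e : R) :
  x <= 0 -> 0 < d -> d <= e -> x / d ^+ 2 <= x / e ^+ 2.
Proof.
move=> x_le0 d_gt0 le_de; have e_gt0 : 0 < e := lt_le_trans d_gt0 le_de.
by rewrite ler_wnM2l // lef_pV2 ?posrE ?exprn_gt0 //; nra.
Qed.

Section Conjugation.
Variables (R : rcfType) (N : nat).

Lemma col_mulmx m n p (A : 'M[R]_(m, n)) (B : 'M[R]_(n, p)) k :
  col k (A *m B) = A *m col k B.
Proof. by rewrite !colE mulmxA. Qed.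

Lemma quad_col (V M : 'M[R]_N) k :
  ((col k V)^T *m M *m col k V) 0 0 = (V^T *m M *m V) k k.
Proof.
rewrite !mxE; apply: eq_bigr => l _; rewrite !mxE.
by congr (_ * _); apply: eq_bigr => m _; rewrite !mxE.
Qed.

Lemma sum_hk (a alpha eps : R) (lam : 'I_N -> R) (V : 'M[R]_N) i j :
  \sum_k hk a alpha lam V eps i j k
  = eps * \sum_k (V^T *m dP R i j *m V) k k * dratio a alpha (lam k).
Proof.
by rewrite mulr_sumr; apply: eq_bigr => k _; rewrite /hk /zk quad_col /dratio /den; ring.
Qed.

Lemma msdE (a alpha sr2 sw2 : R) (mu : 'I_N -> R) :
  msd a alpha sr2 sw2 mu = sr2 / (1 - a ^+ 2 * (1 - alpha) ^+ 2)
    + a ^+ 2 * alpha ^+ 2 * sw2 / N%:R * \sum_k mu k ^+ 2 / den a alpha (mu k).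
Proof.
rewrite /msd !mulr_sumr; congr (_ + _); apply: eq_bigr => k _; rewrite /den; ring.
Qed.

End Conjugation.

Section Eigendecomposition.
Variables (R : rcfType) (N : nat) (P V : 'M[R]_N) (lam : 'I_N -> R).
Hypothesis eigP : orth_eig P lam V.

Let L := diag_mx (\row_k lam k).

Let VVt : V *m V^T = 1%:M.
Proof. exact: mulmx1C eigP.1. Qed.

Let PV : P *m V = V *m L.
Proof.
apply/matrixP => r k; have := congr1 (fun v : 'cV_N => v r 0) (eigP.2 k).
rewrite -col_mulmx mul_mx_diag !mxE => ->; exact: mulrC.
Qed.

Let VtPV : V^T *m P *m V = L.
Proof. by rewrite -mulmxA PV mulmxA eigP.1 mul1mx. Qed.

Let PE : P = V *m L *m V^T.
Proof. by rewrite -PV -mulmxA VVt mulmx1. Qed.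

Let col_norm k : ((col k V)^T *m col k V) 0 0 = 1.
Proof. by have := quad_col V 1%:M k; rewrite !mulmx1 eigP.1 => ->; rewrite mxE eqxx. Qed.

Lemma eig_ge0 : (forall x : 'cV[R]_N, 0 <= (x^T *m P *m x) 0 0) -> forall k, 0 <= lam k.
Proof.
by move=> psd k; have := psd (col k V); rewrite -mulmxA eigP.2 -scalemxAr mxE col_norm mulr1.
Qed.

Lemma den_eig_gt0 (a alpha : R) : P^T = P ->
  spectral_radius_lt1 (a *: (P - alpha%:M)) -> forall k, 0 < den a alpha (lam k).
Proof.
move=> Psym sp_lt1 k; have Vk_neq0 : col k V != 0.
  by apply: contra_eqN (col_norm k) => /eqP ->; rewrite mulmx0 mxE eq_sym oner_eq0.
have := eig_spectral_bound Psym Vk_neq0 (eigP.2 k) sp_lt1.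
rewrite /den subr_gt0 -exprMn -real_normK ?num_real // => lt1.
by rewrite expr_lt1 ?normr_ge0.
Qed.

Lemma msd_Peps_expansion (a alpha sr2 sw2 : R) (i j : 'I_N)
    (lamE : R -> 'I_N -> R) (VE : R -> 'M[R]_N) :
  (forall k, den a alpha (lam k) != 0) ->
  (forall eps, 0 < eps -> orth_eig (Peps P eps i j) (lamE eps) (VE eps)) ->
  exists C delta : R, 0 < delta /\ forall eps, 0 < eps -> eps < delta ->
    `|msd a alpha sr2 sw2 (lamE eps) - msd a alpha sr2 sw2 lam
      - a ^+ 2 * alpha ^+ 2 * sw2 / N%:R * \sum_(k < N) hk a alpha lam V eps i j k|
    <= C * eps ^+ 2.
Proof.
move=> den_neq0 eigE; set F := V^T *m dP R i j *m V.
have [C [delta [delta_gt0 expand]]] := trace_denmx_expansion F den_neq0.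
set c := a ^+ 2 * alpha ^+ 2 * sw2 / N%:R.
exists (`|c| * C), delta; split=> // eps eps_gt0 eps_lt.
have [X [Xden le_C]] := expand eps eps_gt0 eps_lt.
have [VEtVE eigVE] := eigE eps eps_gt0.
set W := V^T *m VE eps.
have WtW : W^T *m W = 1%:M.
  by rewrite trmx_mul trmxK -mulmxA (mulmxA V) VVt mul1mx.
have eigW k : (L + eps *: F) *m col k W = lamE eps k *: col k W.
  have -> : L + eps *: F = V^T *m Peps P eps i j *m V.
    by rewrite /Peps mulmxDr mulmxDl VtPV -scalemxAr -scalemxAl.
  by rewrite !col_mulmx -!mulmxA (mulmxA V) VVt mul1mx eigVE scalemxAr.
rewrite !msdE sum_hk -/F (sum_eig_ratio WtW eigW Xden).
have -> : forall s x y z, s + c * x - (s + c * y) - c * (eps * z) = c * (x - y - eps * z).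
  by move=> *; ring.
by rewrite normrM -mulrA ler_wpM2l.
Qed.

Lemma sum_quad_eig (E : 'M[R]_N) (c1 c2 : R) :
  \sum_k ((col k V)^T *m E *m col k V) 0 0 * (c1 * lam k + c2 * lam k ^+ 2)
  = c1 * \tr (E *m P) + c2 * \tr (E *m (P *m P)).
Proof.
have trE (d : 'I_N -> R) : \tr (E *m (V *m diag_mx (\row_k d k) *m V^T))
    = \sum_k (V^T *m E *m V) k k * d k.
  rewrite !mulmxA mxtrace_mulC !mulmxA; apply: eq_bigr => k _.
  by rewrite mul_mx_diag !mxE.
have PPE : P *m P = V *m diag_mx (\row_k lam k ^+ 2) *m V^T.
  rewrite PE -!mulmxA (mulmxA V^T) eigP.1 mul1mx !mulmxA -[V *m L *m L]mulmxA.
  congr (V *m _ *m _); apply/matrixP => r s; rewrite mul_diag_mx !mxE.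
  by case: eqP => [->|_]; rewrite ?mulr1n ?mulr0n ?mulr0 // expr2.
rewrite PPE PE !trE !mulr_sumr -big_split; apply: eq_bigr => k _ /=.
by rewrite quad_col; ring.
Qed.

Lemma bound_le_sum_hk (a alpha eps : R) (i j : 'I_N) :
  P^T = P -> 0 <= alpha -> 0 <= eps -> 0 < 1 - alpha ^+ 2 * a ^+ 2 ->
  (forall k, 0 <= lam k) -> (forall k, 0 < den a alpha (lam k)) ->
  (forall k : 'I_N, val k = 0%N -> col k V = const_mx (Num.sqrt (N%:R))^-1) ->
  P i j = 0 ->
  bound_ij a alpha P lam eps i j <= \sum_k hk a alpha lam V eps i j k.
Proof.
move=> Psym alpha_ge0 eps_ge0 gain_gt0 lam_ge0 den_gt0 col0 Pij0.
set D := 1 - a ^+ 2 * zeta_max alpha lam ^+ 2.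
have D_gt0 : 0 < D.
  by rewrite subr_gt0 sqr_zeta_max_lt // => k _; rewrite -subr_gt0 den_gt0.
pose c1 := 2 * (1 - alpha ^+ 2 * a ^+ 2); pose c2 := 2 * a ^+ 2 * alpha.
have c1_ge0 : 0 <= c1 by rewrite mulr_ge0 ?ltW.
have c2_ge0 : 0 <= c2 by rewrite mulr_ge0 // mulr_ge0 ?sqr_ge0.
have termwise k :
    zk V eps i j k * (c1 * lam k + c2 * lam k ^+ 2) / D ^+ 2 <= hk a alpha lam V eps i j k.
  have [k0|k_gt0] := posnP k.
    have colk := col0 k k0.
    by rewrite /hk /zk quad_dP colk !mxE subrr expr0n oppr0 !(mulr0, mul0r).
  apply: ler_npdiv_sqr (den_zeta_max_le _ _ _ k_gt0) => //.
  have num_ge0 : 0 <= c1 * lam k + c2 * lam k ^+ 2.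
    exact: addr_ge0 (mulr_ge0 c1_ge0 (lam_ge0 k)) (mulr_ge0 c2_ge0 (sqr_ge0 _)).
  rewrite /zk quad_dP mulrN mulNr oppr_le0.
  exact: mulr_ge0 (mulr_ge0 eps_ge0 (sqr_ge0 _)) num_ge0.
apply: le_trans (ler_sum _ (fun k _ => termwise k)); rewrite -mulr_suml.
under eq_bigr do rewrite /zk -mulrA.
rewrite -mulr_sumr sum_quad_eig !trace_dP.
have Pji0 : P j i = 0 by rewrite -Pij0 -[in RHS]Psym mxE.
have PPsym : (P *m P) j i = (P *m P) i j.
  by have := congr1 (fun A : 'M[R]_N => A i j) (trmx_mul P P); rewrite Psym mxE.
rewrite /bound_ij Pij0 Pji0 PPsym /c1 /c2 -/D le_eqVlt; apply/predU1P; left; ring.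
Qed.

End Eigendecomposition.

Unset Implicit Arguments. Set Strict Implicit. Set Printing Implicit Defensive.

Theorem proposition3 (R : rcfType) (N : nat) (a alpha sr2 sw2 : R)
  (P : 'M[R]_N) (lam : 'I_N -> R) (V : 'M[R]_N) (i0 j0 : 'I_N) :
  (2 <= N)%N ->
  0 < alpha -> alpha <= 1 -> 0 <= sr2 -> 0 <= sw2 ->
  P^T = P ->
  (forall i, \sum_(j < N) P i j = 1) ->
  (forall j, \sum_(i < N) P i j = 1) ->
  (forall x : 'cV[R]_N, 0 <= (x^T *m P *m x) 0 0) ->
  (forall i j, 0 <= P i j) ->
  orth_eig P lam V ->
  (forall k l : 'I_N, (k <= l)%N -> lam l <= lam k) ->
  (forall k : 'I_N, val k = 0%N -> lam k = 1) ->
  (forall k : 'I_N, (0 < val k)%N -> lam k < 1) ->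
  (forall k : 'I_N, -1 < lam k) ->
  (forall k : 'I_N, val k = 0%N -> col k V = const_mx (Num.sqrt (N%:R))^-1) ->
  `|a| < 1 / `|alpha| ->
  spectral_radius_lt1 (a *: (P - alpha%:M)) ->
  i0 != j0 -> ~~ (0 < P i0 j0) ->
  (forall i j : 'I_N, i != j -> ~~ (0 < P i j) ->
     forall (lamE : R -> 'I_N -> R) (VE : R -> 'M[R]_N),
       (forall eps, 0 < eps -> orth_eig (Peps P eps i j) (lamE eps) (VE eps)) ->
       exists C delta : R, 0 < delta /\
         forall eps, 0 < eps -> eps < delta ->
           `| msd a alpha sr2 sw2 (lamE eps) - msd a alpha sr2 sw2 lam
              - a ^+ 2 * alpha ^+ 2 * sw2 / N%:R
                * \sum_(k < N) hk a alpha lam V eps i j k | <= C * eps ^+ 2)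
  /\
  (forall eps, 0 < eps ->
     min_nonedge P (i0, j0) (fun x => \sum_(k < N) hk a alpha lam V eps x.1 x.2 k)
     >= min_nonedge P (i0, j0) (fun x => bound_ij a alpha P lam eps x.1 x.2)).
Proof.
move=> _ alpha_gt0 _ _ _ Psym _ _ psd Pnn eigP _ _ _ _ col0 a_lt sp_lt1 ni0 ne0.
have den_gt0 := den_eig_gt0 eigP Psym sp_lt1.
split=> [i j _ _ lamE VE eigE|eps eps_gt0].
  by apply: msd_Peps_expansion eigE => // k; rewrite gt_eqF.
have gain_gt0 : 0 < 1 - alpha ^+ 2 * a ^+ 2.
  move: a_lt; rewrite (gtr0_norm alpha_gt0) ltr_pdivlMr // => a_lt.
  rewrite subr_gt0 -exprMn mulrC -(real_normK (num_real (a * alpha))).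
  by rewrite normrM (gtr0_norm alpha_gt0) expr_lt1 // mulr_ge0 // ltW.
have bound_le x : nonedge P x -> bound_ij a alpha P lam eps x.1 x.2
                                 <= \sum_k hk a alpha lam V eps x.1 x.2 k.
  case: x => i j /andP [_ /= nPij]; apply: bound_le_sum_hk => //; rewrite ?ltW //.
  - exact: eig_ge0 eigP psd.
  - by apply/eqP; rewrite eq_le Pnn andbT leNgt.
apply: le_min_nonedge (bound_le (i0, j0) _) bound_le.
by rewrite /nonedge ni0 ne0.
Qed.
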